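(* Let $\{x^k\}$ be generated by the ABP algorithm described in the context and assume (A1)–(A6), (A7'), (A8): (A1) $\mathcal F$ is continuously differentiable; (A2) $C$, $Q$ nonempty closed convex, $z_i^*>-\infty$ for each $i$; (A3) each $f_i$ convex; (A4) $\Omega\ne\emptyset$; (A5) $\lambda_k>0$, $\sum\lambda_k=\infty$, $\sum\lambda_k^2<\infty$; (A6) $0<\underline\alpha\le\alpha_k\le\bar\alpha$, $0<\underline\beta\le\beta_k\le\bar\beta$, $0<\underline\gamma\le\gamma_k\le\bar\gamma$ for all $k$; (A7') $\sigma:=\varphi^*-\varphi_{\mathrm{lb}}\le\varepsilon_0$ for a known constant $\varepsilon_0\ge0$; (A8) $\sup_k\|x^k\|\le B<\infty$. Then for every $x^*\in\Omega$ and all $k\ge0$, $$\|x^{k+1}-x^*\|^2\le\|x^k-x^*\|^2-\frac{2\lambda_k}{\eta_k}\Phi_k+\frac{2\bar\alpha\sigma}{\mu}\lambda_k+\lambda_k^2.$$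
   Context: Let $n,m\ge1$, $\mathcal F=(f_1,\dots,f_m)\colon\mathbb R^n\to\mathbb R^m$, $C\subset\mathbb R^n$, $Q\subset\mathbb R^m$, $Q^+:=Q-\mathbb R^m_+=\{y-u:y\in Q,u\in\mathbb R^m_+\}$; $P_S$ is Euclidean projection onto a nonempty closed convex set $S$. Let $z_i^*:=\inf_{x\in C}f_i(x)$, fix $r$ with $r_i>0$, $\sum r_i=1$. Define $\varphi(x):=\max_ir_i(f_i(x)-z_i^* )$, $H(x):=\tfrac12\mathrm{dist}^2(x,C)$, $G(x):=\tfrac12\mathrm{dist}^2(\mathcal F(x),Q^+)$, $\mathcal S:=\{x:H(x)=0,G(x)=0\}$, $\varphi^*:=\inf_{\mathcal S}\varphi$, $\Omega:=\{x\in\mathcal S:\varphi(x)=\varphi^*\}$, $\varphi_{\mathrm{lb}}:=\inf_C\varphi$. ABP algorithm: given $x^0$, $\mu>0$, positive sequences $\{\alpha_k\},\{\beta_k\},\{\gamma_k\},\{\lambda_k\}$: $p^k:=P_{Q^+}(\mathcal F(x^k))$, $\rho^k:=\mathcal F(x^k)-p^k$, $z^k:=x^k-P_C(x^k)$, $v^k:=J_{\mathcal F}(x^k)^T\rho^k$, $w^k:=r_{i^*}\nabla f_{i^*}(x^k)$ with arbitrary $i^*\in\arg\max_ir_i(f_i(x^k)-z_i^* )$, $\Delta_k:=\varphi(x^k)-\varphi_{\mathrm{lb}}$, $d^k:=\alpha_k\mathbf 1_{\{\Delta_k\ge0\}}w^k+\beta_kz^k+\gamma_kv^k$, $\eta_k:=\max(\mu,\|d^k\|)$,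 $x^{k+1}:=x^k-(\lambda_k/\eta_k)d^k$. Notation: $H_k:=H(x^k)$, $G_k:=G(x^k)$, $\Delta_k^+:=\max(\Delta_k,0)$, $\Phi_k:=\alpha_k\Delta_k^++\beta_kH_k+\gamma_kG_k$. *)

From HB Require Import structures.
From mathcomp Require Import all_boot all_order all_algebra.
From mathcomp Require Import all_classical all_reals all_analysis.
Set Implicit Arguments. Unset Strict Implicit. Unset Printing Implicit Defensive.
Import Order.TTheory GRing.Theory Num.Theory.
Import numFieldNormedType.Exports.
Local Open Scope classical_set_scope.
Local Open Scope ring_scope.

Section ABP.
Variable R : realType.

(* Euclidean inner product and norm on R^n (the library norm on 'rV is the max norm) *)
Definition dotv {n} (u v : 'rV[R]_n) : R := \sum_(j < n) u ord0 j * v ord0 j.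
Definition enorm {n} (u : 'rV[R]_n) : R := Num.sqrt (dotv u u).

Definition edist {n} (S : set 'rV[R]_n) (x : 'rV[R]_n) : R :=
  inf [set enorm (x - y) | y in S].

Definition is_proj {n} (S : set 'rV[R]_n) (x p : 'rV[R]_n) : Prop :=
  S p /\ forall y, S y -> enorm (x - p) <= enorm (x - y).

Definition grad {n} (f : 'rV[R]_n -> R) (x : 'rV[R]_n) : 'rV[R]_n :=
  \row_(j < n) 'D_(delta_mx ord0 j) f x.

Variables (n m : nat).

Definition Fvec (f : 'I_m -> 'rV[R]_n -> R) (x : 'rV[R]_n) : 'rV[R]_m :=
  \row_(i < m) f i x.

Definition Qplus (Q : set 'rV[R]_m) : set 'rV[R]_m :=
  [set y - u | y in Q & u in [set u : 'rV[R]_m | forall i, 0 <= u ord0 i]].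

Definition zstar (f : 'I_m -> 'rV[R]_n -> R) (C : set 'rV[R]_n) (i : 'I_m) : R :=
  inf [set f i x | x in C].

(* phi(x) = max_i r_i (f_i(x) - zstar_i)  (sup of a finite nonempty set = max) *)
Definition phi (f : 'I_m -> 'rV[R]_n -> R) (C : set 'rV[R]_n) (r : 'I_m -> R)
    (x : 'rV[R]_n) : R :=
  sup [set r i * (f i x - zstar f C i) | i in [set: 'I_m]].

Definition Hfun (C : set 'rV[R]_n) (x : 'rV[R]_n) : R := (edist C x) ^+ 2 / 2.

Definition Gfun (f : 'I_m -> 'rV[R]_n -> R) (Q : set 'rV[R]_m) (x : 'rV[R]_n) : R :=
  (edist (Qplus Q) (Fvec f x)) ^+ 2 / 2.

Definition Sfeas (f : 'I_m -> 'rV[R]_n -> R) (C : set 'rV[R]_n) (Q : set 'rV[R]_m) :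
  set 'rV[R]_n := [set x | Hfun C x = 0 /\ Gfun f Q x = 0].

Definition phistar f C Q r : R := inf [set phi f C r x | x in Sfeas f C Q].

Definition Omega f C Q r : set 'rV[R]_n :=
  [set x | Sfeas f C Q x /\ phi f C r x = phistar f C Q r].

Definition philb f C r : R := inf [set phi f C r x | x in C].

End ABP.

From Pilot Require Import Defs.
From HB Require Import structures.
From mathcomp Require Import all_boot all_order all_algebra.
From mathcomp Require Import all_classical all_reals all_analysis.
From mathcomp Require Import ring lra.
Set Implicit Arguments. Unset Strict Implicit. Unset Printing Implicit Defensive.
Import Order.TTheory GRing.Theory Num.Theory.
Import numFieldNormedType.Exports.
Local Open Scope classical_set_scope.
Local Open Scope ring_scope.

(** Each of the three parts of the direction d^k correlates with x^k - x⋆.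
    Convexity of f_{i^*} gives <w^k, x^k - x⋆> >= phi(x^k) - phi(x⋆) = Delta_k - sigma;
    the variational inequality of the projections onto C and Q^+, convexity of the f_i
    and nonnegativity of the residual rho^k give <z^k, x^k - x⋆> >= H_k and
    <v^k, x^k - x⋆> >= G_k.  Hence <d^k, x^k - x⋆> >= Phi_k - alpha_k sigma, and
    expanding ||x^k - x⋆ - (lambda_k / eta_k) d^k||^2 with eta_k >= max(mu, ||d^k||)
    yields the bound. *)

Section euclidean.
Variables (R : realType) (n : nat).
Implicit Types (u v w : 'rV[R]_n) (S : set 'rV[R]_n).

Lemma dotvC u v : dotv u v = dotv v u.
Proof. by apply: eq_bigr => j _; rewrite mulrC. Qed.

Lemma dotvDl u v w : dotv (u + v) w = dotv u w + dotv v w.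
Proof. by rewrite /dotv -big_split; apply: eq_bigr => j _; rewrite mxE mulrDl. Qed.

Lemma dotvZl a u v : dotv (a *: u) v = a * dotv u v.
Proof. by rewrite /dotv mulr_sumr; apply: eq_bigr => j _; rewrite mxE mulrA. Qed.

Lemma dotvBl u v w : dotv (u - v) w = dotv u w - dotv v w.
Proof. by rewrite dotvDl -scaleN1r dotvZl mulN1r. Qed.

Lemma dotvBr u v w : dotv w (u - v) = dotv w u - dotv w v.
Proof. by rewrite dotvC dotvBl !(dotvC w). Qed.

Lemma dotvZr a u v : dotv v (a *: u) = a * dotv v u.
Proof. by rewrite dotvC dotvZl dotvC. Qed.

Lemma dotvNr u v : dotv u (- v) = - dotv u v.
Proof. by rewrite -scaleN1r dotvZr mulN1r. Qed.

Lemma dotv_suml (I : finType) (a : I -> R) (g : I -> 'rV[R]_n) v :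
  dotv (\sum_i a i *: g i) v = \sum_i a i * dotv (g i) v.
Proof.
rewrite (big_morph (fun u => dotv u v) (id1 := 0) (op1 := +%R)).
- by apply: eq_bigr => i _; rewrite dotvZl.
- by move=> u w; rewrite dotvDl.
- by rewrite /dotv big1 // => j _; rewrite mxE mul0r.
Qed.

Lemma dotv_delta u i : dotv u (delta_mx ord0 i) = u ord0 i.
Proof.
rewrite /dotv (bigD1 i) //= big1 ?addr0; first by rewrite mxE !eqxx mulr1.
by move=> j ji; rewrite mxE (negbTE ji) andbF mulr0.
Qed.

Lemma dotv_ge0 u : 0 <= dotv u u.
Proof. by apply: sumr_ge0 => j _; rewrite -expr2 sqr_ge0. Qed.

Lemma enorm_ge0 u : 0 <= enorm u.
Proof. exact: sqrtr_ge0. Qed.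

Lemma enorm_sqr u : enorm u ^+ 2 = dotv u u.
Proof. by rewrite sqr_sqrtr // dotv_ge0. Qed.

Lemma enorm_sqrB u v s :
  enorm (u - s *: v) ^+ 2 = enorm u ^+ 2 - 2 * s * dotv u v + s ^+ 2 * enorm v ^+ 2.
Proof. by rewrite !enorm_sqr !dotvBl !dotvBr !dotvZl !dotvZr (dotvC v u); ring. Qed.

Lemma enorm_eq0 u : enorm u = 0 -> u = 0.
Proof.
move=> /eqP; rewrite sqrtr_eq0 => uu_le0.
have /psumr_eq0P uu0 : dotv u u = 0 by apply/eqP; rewrite eq_le uu_le0 dotv_ge0.
apply/rowP => j; apply/eqP; rewrite mxE -sqrf_eq0 expr2.
by rewrite uu0 // => k _; rewrite -expr2 sqr_ge0.
Qed.

Lemma is_proj_le S x p y : is_proj S x p -> S y ->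
  enorm (x - p) ^+ 2 <= enorm (x - y) ^+ 2.
Proof. by move=> [_ pmin] Sy; rewrite lerXn2r ?nnegrE ?enorm_ge0 ?pmin. Qed.

Lemma edist_is_proj S x p : is_proj S x p -> Defs.edist S x = enorm (x - p).
Proof.
move=> [Sp pmin]; apply/eqP; rewrite eq_le; apply/andP; split.
  apply: ge_inf; last by exists p.
  by exists 0 => _ [y _ <-]; exact: enorm_ge0.
by apply: lb_le_inf; [exists (enorm (x - p)), p | move=> _ [y Sy <-]; exact: pmin].
Qed.

Lemma is_proj_mem S x p : is_proj S x p -> Defs.edist S x ^+ 2 / 2 = 0 -> S x.
Proof.
move=> proj; rewrite (edist_is_proj proj) => /eqP.
rewrite mulf_eq0 invr_eq0 pnatr_eq0 orbF expf_eq0 /= => /eqP /enorm_eq0 /eqP.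
by rewrite subr_eq0 => /eqP ->; case: proj.
Qed.

Lemma is_proj_variational S x p y :
  convex_set S -> is_proj S x p -> S y -> dotv (x - p) (y - p) <= 0.
Proof.
move=> cS proj Sy; have [Sp _] := proj.
set c := dotv (x - p) (y - p); set b := enorm (y - p) ^+ 2.
(* Comparing [p] with the points [p + t (y - p)] of the segment gives [2 c <= t b];
   [t = c / (c + b)] then rules out [c > 0]. *)
have seg t : 0 < t -> t <= 1 -> 2 * c <= t * b.
  move=> t0 t1.
  have Sq : S (t *: y + (1 - t) *: p).
    by have := cS y p (Itv01 (ltW t0) t1); rewrite !inE; apply.
  have := is_proj_le proj Sq.
  have -> : x - (t *: y + (1 - t) *: p) = (x - p) - t *: (y - p).
    by apply/rowP => j; rewrite !mxE; ring.
  rewrite enorm_sqrB -/c -/b => le_t.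
  have : 0 <= t * (t * b - 2 * c) by rewrite mulrBr mulrA -expr2; lra.
  by rewrite pmulr_rge0 //; lra.
rewrite leNgt; apply/negP => c0.
have b0 : 0 <= b by rewrite sqr_ge0.
have cb0 : 0 < c + b by lra.
have := seg (c / (c + b)) (divr_gt0 c0 cb0).
rewrite ler_pdivrMr // mul1r lerDl mulrAC ler_pdivlMr // => /(_ b0).
nra.
Qed.

Lemma sqr_edist_le S x p y : convex_set S -> is_proj S x p -> S y ->
  Defs.edist S x ^+ 2 / 2 <= dotv (x - p) (x - y).
Proof.
move=> cS proj Sy; have var := is_proj_variational cS proj Sy.
have -> : x - y = (x - p) - (y - p) by apply/rowP => j; rewrite !mxE; ring.
rewrite (edist_is_proj proj) enorm_sqr (dotvBr (x - p) (y - p)).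
by have := dotv_ge0 (x - p); lra.
Qed.

Lemma dotv_grad (f : 'rV[R]_n -> R) x h : differentiable f x ->
  dotv (grad f x) h = 'D_h f x.
Proof.
move=> df; rewrite deriveE // {2}(row_sum_delta h) linear_sum.
by apply: eq_bigr => j _; rewrite linearZ /= mxE deriveE // mulrC.
Qed.

Lemma convex_grad_le (f : 'rV[R]_n -> R) x y : differentiable f x ->
  convex_function [set: _] f -> dotv (grad f x) (y - x) <= f y - f x.
Proof.
move=> df cf; rewrite dotv_grad //; set h := y - x.
have := @diff_derivable _ _ _ _ _ h df; rewrite /derive; set g := (fun t : R => _) => dg.
have g_right : g @ 0^'+ --> lim (g @ 0^').
  by apply: cvg_trans dg; apply: cvg_app; apply: within_subset => t /= t0; rewrite gt_eqF.
apply: (cvgr_to_le g_right); near=> t.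
have t0 : 0 < t by near: t; exact: nbhs_right_gt.
have t1 : t <= 1 by apply: ltW; near: t; exact: nbhs_right_lt.
have := cf (Itv01 (ltW t0) t1) y x (in_setT _) (in_setT _).
have -> : conv (Itv01 (ltW t0) t1) (y : convex_lmodType _) x = t *: h + x :> 'rV[R]_n.
  by rewrite /conv /= /h; apply/rowP => j; rewrite !mxE /unstable.onem; ring.
rewrite convRE /g /= /unstable.onem ler_pdivrMl //; lra.
Unshelve. all: by end_near.
Qed.

End euclidean.

Section projection_onto_Qplus.
Variables (R : realType) (m : nat) (Q : set 'rV[R]_m).

Lemma convex_Qplus : convex_set Q -> convex_set (Qplus Q).
Proof.
move=> cQ a b t; rewrite !inE => -[q1 Qq1 [u1 u1_ge0 <-]] [q2 Qq2 [u2 u2_ge0 <-]].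
have := cQ q1 q2 t; rewrite !inE => /(_ Qq1 Qq2) Qq.
exists (conv t (q1 : convex_lmodType _) q2) => //.
exists (t%:num *: u1 + (1 - t%:num) *: u2).
  by move=> i; rewrite !mxE addr_ge0 // mulr_ge0 // ?u1_ge0 ?u2_ge0.
by apply/rowP => j; rewrite /conv /= !mxE /unstable.onem; ring.
Qed.

(* If the residual [a] were negative, [p + a e_i] would still lie in [Q - R^m_+] and be closer to [y]. *)
Lemma is_proj_Qplus_ge0 y p : is_proj (Qplus Q) y p -> forall i, 0 <= (y - p) ord0 i.
Proof.
move=> proj i; have [[q Qq [u u_ge0 qu_p]] _] := proj.
rewrite leNgt; apply/negP; set a := (y - p) ord0 i => a_lt0.
have Qp' : Qplus Q (p + a *: delta_mx ord0 i).
  exists q => //; exists (u - a *: delta_mx ord0 i).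
    by move=> j; rewrite !mxE subr_ge0 (le_trans _ (u_ge0 j)) // mulr_le0_ge0 ?ler0n ?ltW.
  by rewrite -qu_p opprB addrA addrAC.
have := is_proj_le proj Qp'; rewrite opprD addrA enorm_sqrB dotv_delta -/a.
rewrite [enorm (delta_mx _ _) ^+ 2]enorm_sqr dotv_delta mxE !eqxx /=; nra.
Qed.

End projection_onto_Qplus.

Section ABP_estimates.
Variables (R : realType) (n m : nat).
Variables (f : 'I_m -> 'rV[R]_n -> R) (C : set 'rV[R]_n) (r : 'I_m -> R).

Lemma le_phi x i : r i * (f i x - zstar f C i) <= phi f C r x.
Proof.
apply: ub_le_sup; last by exists i.
exists (\sum_j `|r j * (f j x - zstar f C j)|) => _ [j _ <-].
by rewrite (le_trans (ler_norm _)) // (bigD1 j) //= lerDl sumr_ge0.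
Qed.

Lemma phi_ge0 x i : 0 <= r i -> has_lbound [set f i y | y in C] -> C x ->
  0 <= phi f C r x.
Proof.
move=> ri_ge0 lb_fi Cx; apply: le_trans (le_phi x i).
by rewrite mulr_ge0 // subr_ge0; apply: ge_inf => //; exists x.
Qed.

Lemma philb_le_phistar Q : (forall x, C x -> 0 <= phi f C r x) ->
  Sfeas f C Q `<=` C -> Sfeas f C Q !=set0 -> philb f C r <= phistar f C Q r.
Proof.
move=> phi_ge0C SC [x Sx]; apply: lb_le_inf; first by exists (phi f C r x), x.
move=> _ [y Sy <-]; apply: ge_inf; last by exists y => //; exact: SC.
by exists 0 => _ [z Cz <-]; exact: phi_ge0C.
Qed.

Lemma phiB_le_dotv x y i : 0 <= r i ->
  differentiable (f i) x -> convex_function [set: _] (f i) ->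
  r i * (f i x - zstar f C i) = phi f C r x ->
  phi f C r x - phi f C r y <= dotv (r i *: grad (f i) x) (x - y).
Proof.
move=> ri_ge0 dfi cfi phix; rewrite -phix dotvZl.
have := le_phi y i; have := convex_grad_le y dfi cfi.
rewrite -opprB dotvNr => grad_le phi_y; nra.
Qed.

Lemma dotv_FvecB_le x y (rho : 'rV[R]_m) :
  (forall i, 0 <= rho ord0 i) -> (forall i, differentiable (f i) x) ->
  (forall i, convex_function [set: _] (f i)) ->
  dotv rho (Fvec f x - Fvec f y) <= dotv (\sum_i rho ord0 i *: grad (f i) x) (x - y).
Proof.
move=> rho_ge0 df cf; rewrite dotv_suml; apply: ler_sum => i _.
rewrite !mxE ler_wpM2l //.
by have := convex_grad_le y (df i) (cf i); rewrite -opprB dotvNr; lra.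
Qed.

Lemma Gfun_le_dotv Q x y p : convex_set Q -> is_proj (Qplus Q) (Fvec f x) p ->
  Qplus Q (Fvec f y) -> (forall i, differentiable (f i) x) ->
  (forall i, convex_function [set: _] (f i)) ->
  Gfun f Q x <= dotv (\sum_i (Fvec f x - p) ord0 i *: grad (f i) x) (x - y).
Proof.
move=> cQ proj QFy df cf.
apply: le_trans (dotv_FvecB_le y (is_proj_Qplus_ge0 proj) df cf).
exact: sqr_edist_le (convex_Qplus cQ) proj QFy.
Qed.

End ABP_estimates.

Section normalized_step.
Variables (R : realType) (n : nat).
Implicit Types (D d w z v : 'rV[R]_n).

Lemma dotv_direction_ge w z v D (a b g Delta sigma H G : R) :
  0 <= a -> 0 <= b -> 0 <= g -> 0 <= sigma ->
  Delta - sigma <= dotv w D -> H <= dotv z D -> G <= dotv v D ->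
  a * Num.max Delta 0 + b * H + g * G - a * sigma <=
    dotv ((if 0 <= Delta then a else 0) *: w + b *: z + g *: v) D.
Proof.
move=> a0 b0 g0 s0 wD zD vD; rewrite !dotvDl !dotvZl.
have := ler_wpM2l b0 zD; have := ler_wpM2l g0 vD; have := mulr_ge0 a0 s0.
case: (leP 0 Delta) => _; last by rewrite mul0r mulr0 => *; lra.
by have := ler_wpM2l a0 wD => *; lra.
Qed.

(* The normalisation [eta >= |d|] bounds the quadratic term by [lambda^2], and [eta >= mu] the error term. *)
Lemma normalized_step_le D d (mu lambda Phi c : R) :
  0 < mu -> 0 < lambda -> 0 <= c -> Phi - dotv d D <= c ->
  enorm (D - (lambda / Num.max mu (enorm d)) *: d) ^+ 2 <=
    enorm D ^+ 2 - 2 * lambda / Num.max mu (enorm d) * Phi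
    + 2 * c / mu * lambda + lambda ^+ 2.
Proof.
move=> mu0 lambda0 c0 gap; set eta := Num.max mu (enorm d).
have eta0 : 0 < eta by rewrite lt_max mu0.
have s0 : 0 <= lambda / eta by rewrite divr_ge0 ?ltW.
have quad : (lambda / eta) ^+ 2 * enorm d ^+ 2 <= lambda ^+ 2.
  rewrite -exprMn lerXn2r ?nnegrE ?(mulr_ge0 s0 (enorm_ge0 d)) ?(ltW lambda0) //.
  by rewrite mulrAC ler_pdivrMr // ler_pM2l // le_max lexx orbT.
have err : lambda / eta * c <= lambda / mu * c.
  by rewrite ler_wpM2r // ler_wpM2l ?(ltW lambda0) // lef_pV2 ?posrE // le_max lexx.
have := ler_wpM2l s0 gap.
rewrite enorm_sqrB (dotvC D d) -(mulrA 2 lambda) => *; lra.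
Qed.

End normalized_step.

Theorem lemma16 (R : realType) (n m : nat)
  (f : 'I_m -> 'rV[R]_n -> R) (C : set 'rV[R]_n) (Q : set 'rV[R]_m)
  (r : 'I_m -> R)
  (PC : 'rV[R]_n -> 'rV[R]_n) (PQ : 'rV[R]_m -> 'rV[R]_m)
  (x : nat -> 'rV[R]_n) (istar : nat -> 'I_m) (mu : R)
  (alpha beta gamma lambda : nat -> R)
  (alo ahi blo bhi glo ghi eps0 B : R) :
  (0 < n)%N -> (0 < m)%N ->
  (forall i, 0 < r i) -> \sum_(i < m) r i = 1 ->
  (* projections *)
  (forall y, is_proj C y (PC y)) ->
  (forall y, is_proj (Qplus Q) y (PQ y)) ->
  (* (A1) F continuously differentiable *)
  (forall i y, differentiable (f i) y) ->
  (forall i, continuous (grad (f i))) ->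
  (* (A2) *)
  C !=set0 -> closed C -> convex_set C ->
  Q !=set0 -> closed Q -> convex_set Q ->
  (forall i, has_lbound [set f i y | y in C]) ->
  (* (A3) *)
  (forall i, convex_function [set: _] (f i)) ->
  (* (A4) *)
  Omega f C Q r !=set0 ->
  (* (A5) *)
  (forall k, 0 < lambda k) ->
  (series lambda @ \oo --> +oo) ->
  cvg (series (fun k => lambda k ^+ 2) @ \oo) ->
  (* (A6) *)
  0 < alo -> 0 < blo -> 0 < glo ->
  (forall k, alo <= alpha k <= ahi) ->
  (forall k, blo <= beta k <= bhi) ->
  (forall k, glo <= gamma k <= ghi) ->
  (* (A7') *)
  0 <= eps0 ->
  phistar f C Q r - philb f C r <= eps0 ->
  (* (A8) *)
  (forall k, enorm (x k) <= B) ->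
  (* ABP algorithm *)
  0 < mu ->
  (forall k, r (istar k) * (f (istar k) (x k) - zstar f C (istar k))
             = phi f C r (x k)) ->
  (forall k,
     let p := PQ (Fvec f (x k)) in
     let rho := Fvec f (x k) - p in
     let z := x k - PC (x k) in
     let v := \sum_(i < m) rho ord0 i *: grad (f i) (x k) in
     let w := r (istar k) *: grad (f (istar k)) (x k) in
     let Delta := phi f C r (x k) - philb f C r in
     let d := (if 0 <= Delta then alpha k else 0) *: w + beta k *: z + gamma k *: v in
     let eta := Num.max mu (enorm d) in
     x k.+1 = x k - (lambda k / eta) *: d) ->
  (* conclusion *)
  forall xs, Omega f C Q r xs ->
  forall k,
     let p := PQ (Fvec f (x k)) in
     let rho := Fvec f (x k) - p in
     let z := x k - PC (x k) in
     let v := \sum_(i < m) rho ord0 i *: grad (f i) (x k) in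
     let w := r (istar k) *: grad (f (istar k)) (x k) in
     let Delta := phi f C r (x k) - philb f C r in
     let d := (if 0 <= Delta then alpha k else 0) *: w + beta k *: z + gamma k *: v in
     let eta := Num.max mu (enorm d) in
     let sigma := phistar f C Q r - philb f C r in
     let Phi := alpha k * Num.max Delta 0 + beta k * Hfun C (x k)
                + gamma k * Gfun f Q (x k) in
     enorm (x k.+1 - xs) ^+ 2 <=
       enorm (x k - xs) ^+ 2 - 2 * lambda k / eta * Phi
       + 2 * ahi * sigma / mu * lambda k + lambda k ^+ 2.
Proof.
move=> _ _ r_gt0 _ projC projQ df _ _ _ cC _ _ cQ lb_f cf Omega0 lambda_gt0 _ _
  alo_gt0 blo_gt0 glo_gt0 alpha_bd beta_bd gamma_bd _ _ _ mu_gt0 istar_max step xs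
  [[Hxs0 Gxs0] phi_xs] k /=.
have Cxs : C xs := is_proj_mem (projC xs) Hxs0.
have QFxs : Qplus Q (Fvec f xs) := is_proj_mem (projQ _) Gxs0.
have [/(le_trans (ltW alo_gt0)) alpha_ge0 ahi_ge] := andP (alpha_bd k).
have [/(le_trans (ltW blo_gt0)) beta_ge0 _] := andP (beta_bd k).
have [/(le_trans (ltW glo_gt0)) gamma_ge0 _] := andP (gamma_bd k).
set Delta := phi f C r (x k) - philb f C r.
set sigma := phistar f C Q r - philb f C r.
set w := r (istar k) *: grad (f (istar k)) (x k).
have sigma_ge0 : 0 <= sigma.
  rewrite subr_ge0; apply: philb_le_phistar.
  - by move=> y; apply: phi_ge0 (ltW (r_gt0 (istar k))) (lb_f _).
  - by move=> y [Hy0 _]; exact: is_proj_mem (projC y) Hy0.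
  - by have [y [Sy _]] := Omega0; exists y.
have w_gap : Delta - sigma <= dotv w (x k - xs).
  have := phiB_le_dotv xs (ltW (r_gt0 _)) (df _ _) (cf _) (istar_max k).
  by rewrite /Delta /sigma -phi_xs; lra.
have z_gap : Hfun C (x k) <= dotv (x k - PC (x k)) (x k - xs).
  exact: sqr_edist_le cC (projC (x k)) Cxs.
have v_gap := Gfun_le_dotv cQ (projQ _) QFxs (df^~ (x k)) cf.
have := dotv_direction_ge alpha_ge0 beta_ge0 gamma_ge0 sigma_ge0 w_gap z_gap v_gap.
have /= -> := step k; rewrite -/Delta -/w.
set d := (if 0 <= Delta then alpha k else 0) *: w + _ + _.
rewrite [x k - _ - xs]addrAC -(mulrA 2 ahi) => d_gap.
apply: normalized_step_le => //; first by rewrite mulr_ge0 // (le_trans alpha_ge0).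
by have := ler_wpM2r sigma_ge0 ahi_ge => alpha_sigma_le; lra.
Qed.
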